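(* Let $K^G, K^F, T \ge 1$ be integers and $p = K^G + T K^F$. Let $\boldsymbol{\Sigma}$ be a $p \times p$ symmetric positive definite matrix partitioned into blocks (rows and columns indexed first by a $G$-block of size $K^G$ and then by $K^F$ consecutive $F$-blocks $F_1,\dots,F_{K^F}$, each of size $T$) of the form $$\boldsymbol{\Sigma}=\begin{bmatrix} \boldsymbol{\Sigma}_{GG} & \boldsymbol{\Sigma}_{GF_1} & \cdots & \boldsymbol{\Sigma}_{GF_{K^F}} \\ \boldsymbol{\Sigma}_{GF_1}^\intercal & \boldsymbol{\Sigma}_{F_1F_1} & & \boldsymbol{0} \\ \vdots & & \ddots & \\ \boldsymbol{\Sigma}_{GF_{K^F}}^\intercal & \boldsymbol{0} & & \boldsymbol{\Sigma}_{F_{K^F}F_{K^F}} \end{bmatrix},$$ where $\boldsymbol{\Sigma}_{GG}$ is a $K^G\times K^G$ diagonal matrix, each $\boldsymbol{\Sigma}_{F_kF_k}$ is $T\times T$, each $\boldsymbol{\Sigma}_{GF_k}$ is $K^G \times T$, and all blocks between $F_k$ and $F_l$ with $k\neq l$ are zero. For $k_1,k_2\in\{1,\dots,K^F\}$ write $k_1\sim k_2$ if and only if there exists $g\in\{1,\dots,K^G\}$ such that the $g$-th row of $\boldsymbol{\Sigma}_{GF_{k_1}}$ and the $g$-th row of $\boldsymbol{\Sigma}_{GF_{k_2}}$ are both nonzero vectors, and assume that $\sim$ is a partial equivalence relation (i.e., it is transitive; it is symmetric by definition). Let $\boldsymbol{\Sigma}^{-1}=\mathbf{L}^\intercal\mathbf{D}^{-1}\mathbf{L}$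 be the (unique) decomposition with $\mathbf{L}$ lower triangular with unit diagonal and $\mathbf{D}$ diagonal with positive entries, and set $\boldsymbol{\zeta}=\mathbf{I}-\mathbf{L}$ with entries $\zeta_{ji}$. Then for all $k_1<k_2$ in $\{1,\dots,K^F\}$ with $k_1\nsim k_2$, we have $\zeta_{ji}=0$ for all $i\in\{K^G+(k_1-1)T+1,\dots,K^G+k_1T\}$ and all $j\in\{K^G+(k_2-1)T+1,\dots,K^G+k_2T\}$.
   Context: Equivalently, if $(\gamma_1,\dots,\gamma_p)$ is a mean-zero random vector with covariance $\boldsymbol{\Sigma}$, then for $j>1$, $(\zeta_{j1},\dots,\zeta_{j,j-1})$ are the coefficients of the best linear predictor of $\gamma_j$ from $\gamma_1,\dots,\gamma_{j-1}$ (with $\zeta_{jk}=0$ for $k\ge j$), and $\mathbf{D}$ is the diagonal matrix of the corresponding residual variances. In the paper, $\boldsymbol{\Sigma}=\boldsymbol{\Sigma}_{\boldsymbol{\gamma}}+\sigma_\epsilon^2\mathbf{I}_p$ is the covariance of combined random effects and errors for geometric principal component projections (the $G$-block) and time series of length $T$ of projections on $K^F$ functional principal components (the $F$-blocks). *)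

From mathcomp Require Import all_boot all_order all_algebra.
Set Implicit Arguments. Unset Strict Implicit. Unset Printing Implicit Defensive.
Import Order.TTheory GRing.Theory Num.Theory.
Local Open Scope ring_scope.

(* Indices of a p x p matrix with p = KG + KF * T:
   G-block index g (0-based) is position g;
   F-block k (0-based), within-block time t (0-based) is position KG + k*T + t. *)
Definition gidx (KG KF T : nat) (g : 'I_KG) : 'I_(KG + KF * T) :=
  lshift (KF * T) g.
Definition fidx (KG KF T : nat) (k : 'I_KF) (t : 'I_T) : 'I_(KG + KF * T) :=
  rshift KG (mxvec_index k t).

Definition simF (R : pzRingType) (KG KF T : nat) (S : 'M[R]_(KG + KF * T))
  (k1 k2 : 'I_KF) : Prop :=
  exists g : 'I_KG,
    (exists t : 'I_T, S (gidx KF T g) (fidx KG k1 t) != 0) /\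
    (exists t : 'I_T, S (gidx KF T g) (fidx KG k2 t) != 0).

From mathcomp Require Import all_boot all_order all_algebra.
From mathcomp Require Import zify.
Import Order.TTheory GRing.Theory Num.Theory.
Set Implicit Arguments. Unset Strict Implicit. Unset Printing Implicit Defensive.
Local Open Scope ring_scope.

(* Since S^-1 = L^T D^-1 L, we get L S = D L^-T, which is upper triangular:
   row j of L is S-orthogonal to every coordinate vector before j.  Let X be
   the coordinates of the F-blocks in the ~-class of k1 together with the
   G-coordinates coupled to them; transitivity of ~ makes S vanish between X
   and its complement.  For j outside X, the part x of row j of L supported on
   X (and before j) then has x^T S x = 0, so x = 0 by positive definiteness. *)

Lemma trmx_unitrig_right_inv_trig (R : pzRingType) n (A W : 'M[R]_n) :
  is_trig_mx A -> (forall i, A i i = 1) -> A^T *m W = 1%:M -> is_trig_mx W^T.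
Proof.
move=> /is_trig_mxP Atrig Adiag AW; apply/is_trig_mxP => b a; rewrite mxE.
have [k] := ubnP (n - a); elim: k a => // k IHk a lt_na_k lt_ba.
have := congr1 (fun M : 'M[R]_n => M a b) AW.
rewrite [RHS]mxE -val_eqE gtn_eqF // mulr0n mxE (bigD1 a) //= mxE Adiag mul1r.
rewrite big1 ?addr0 // => m ne_ma; rewrite mxE.
case: (ltngtP m a) => [lt_ma|lt_am|/val_inj eq_ma]; first by rewrite Atrig ?mul0r.
  by rewrite (IHk m) ?mulr0 //; [have := ltn_ord m; lia | exact: ltn_trans lt_am].
by rewrite eq_ma eqxx in ne_ma.
Qed.

Lemma is_trig_mulmx_diag (R : pzRingType) n (A B : 'M[R]_n) :
  is_trig_mx A -> is_diag_mx B -> is_trig_mx (A *m B).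
Proof.
move=> /is_trig_mxP Atrig /is_diag_mxP Bdiag; apply/is_trig_mxP => i j lt_ij.
rewrite mxE (bigD1 j) //= Atrig // mul0r add0r.
by rewrite big1 // => m ne_mj; rewrite Bdiag ?mulr0.
Qed.

Lemma ldl_mulmx_upper (R : comUnitRingType) n (S L D : 'M[R]_n) :
  S \in unitmx -> D \in unitmx -> is_trig_mx L -> (forall i, L i i = 1) ->
  is_diag_mx D -> invmx S = L^T *m invmx D *m L -> is_trig_mx (L *m S)^T.
Proof.
move=> Sunit Dunit Ltrig Ldiag Ddiag defSinv.
have Wtrig : is_trig_mx (invmx D *m (L *m S))^T.
  apply: trmx_unitrig_right_inv_trig Ltrig Ldiag _.
  by rewrite !mulmxA -defSinv mulVmx.
have -> : L *m S = D *m (invmx D *m (L *m S)) by rewrite mulmxA mulmxV ?mul1mx.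
by rewrite trmx_mul is_trig_mulmx_diag ?is_diag_trmx.
Qed.

Lemma posdef_unitmx (R : numFieldType) n (S : 'M[R]_n) :
  (forall v : 'cV[R]_n, v != 0 -> 0 < (v^T *m S *m v) 0 0) -> S \in unitmx.
Proof.
move=> Spd; rewrite unitmxE unitfE; apply/det0P => -[v nz_v vS0].
by have := Spd v^T; rewrite trmx_eq0 trmxK vS0 mul0mx mxE ltxx => /(_ nz_v).
Qed.

Lemma trig_factor_uncoupled_eq0 (R : numDomainType) n (S L : 'M[R]_n)
    (X : pred 'I_n) :
  (forall v : 'cV[R]_n, v != 0 -> 0 < (v^T *m S *m v) 0 0) ->
  is_trig_mx L -> is_trig_mx (L *m S)^T ->
  (forall a b, X a -> ~~ X b -> S b a = 0) ->
  forall j i, ~~ X j -> X i -> L j i = 0.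
Proof.
move=> Spd /is_trig_mxP Ltrig /is_trig_mxP LStrig Xsep j i Xj Xi.
pose x := \col_m (if X m && (m < j)%N then L j m else 0) : 'cV[R]_n.
(* The rest of row j of L is either past the diagonal or outside X, where it
   only meets the zero entries of S between X and its complement. *)
have xS_row b : X b -> (x^T *m S) 0 b = (L *m S) j b.
  move=> Xb; rewrite !mxE; apply: eq_bigr => a _; rewrite !mxE.
  case: ifP => // /negbT; rewrite negb_and -leqNgt.
  rewrite leq_eqVlt; case Xa: (X a) => /=; last by rewrite Xsep ?Xa ?mulr0.
  case/orP => [/eqP/val_inj eq_ja|lt_ja]; last by rewrite Ltrig ?mul0r.
  by rewrite eq_ja Xa in Xj.
have xSx0 : (x^T *m S *m x) 0 0 = 0.
  rewrite mxE; apply: big1 => b _; rewrite [x b 0]mxE.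
  case: ifP => [/andP[Xb lt_bj]|_]; last by rewrite mulr0.
  by have := LStrig b j lt_bj; rewrite mxE xS_row // => ->; rewrite mul0r.
have x0 : x = 0.
  by apply/eqP; apply: contraT => /Spd; rewrite xSx0 ltxx.
case: (ltngtP i j) => [lt_ij|lt_ji|/val_inj eq_ij]; last by rewrite -eq_ij Xi in Xj.
  by have := congr1 (fun v : 'cV[R]_n => v i 0) x0; rewrite !mxE Xi lt_ij.
by rewrite Ltrig.
Qed.

Lemma mxvec_index_inj m n (i i' : 'I_m) (j j' : 'I_n) :
  mxvec_index i j = mxvec_index i' j' -> (i, j) = (i', j').
Proof. by move=> /cast_ord_inj /enum_rank_inj. Qed.

Lemma block_index_ind KG KF T (P : 'I_(KG + KF * T) -> Prop) :
  (forall g, P (gidx KF T g)) -> (forall k t, P (fidx KG k t)) -> forall m, P m.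
Proof.
move=> PG PF m; case: (split_ordP m) => [g ->|r ->]; first exact: PG.
by case/mxvec_indexP: r => k t; apply: PF.
Qed.

Section SimilarityClass.

Variables (R : pzRingType) (KG KF T : nat) (S : 'M[R]_(KG + KF * T)).
Hypothesis Ssym : S^T = S.
Hypothesis SGG_diag : forall g1 g2 : 'I_KG, g1 != g2 ->
  S (gidx KF T g1) (gidx KF T g2) = 0.
Hypothesis SFF_diag : forall (k1 k2 : 'I_KF) (t1 t2 : 'I_T), k1 != k2 ->
  S (fidx KG k1 t1) (fidx KG k2 t2) = 0.
Hypothesis simF_trans : forall k1 k2 k3 : 'I_KF,
  simF S k1 k2 -> simF S k2 k3 -> simF S k1 k3.
Variable k0 : 'I_KF.

Definition GF_coupled (g : 'I_KG) (k : 'I_KF) :=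
  [exists t, S (gidx KF T g) (fidx KG k t) != 0].

Definition simFb (k1 k2 : 'I_KF) :=
  [exists g, GF_coupled g k1 && GF_coupled g k2].

Lemma simFP k1 k2 : reflect (simF S k1 k2) (simFb k1 k2).
Proof.
apply: (iffP existsP) => [[g /andP[/existsP ? /existsP ?]]|[g [[t1 ?] [t2 ?]]]].
  by exists g.
by exists g; apply/andP; split; apply/existsP; [exists t1 | exists t2].
Qed.

Definition Fclass (k : 'I_KF) := (k == k0) || simFb k k0.

Definition Gclass (g : 'I_KG) := [exists k, Fclass k && GF_coupled g k].

Definition block_class (m : 'I_(KG + KF * T)) :=
  [exists g, (m == gidx KF T g) && Gclass g] ||
  [exists k, [exists t, (m == fidx KG k t) && Fclass k]].

Lemma block_class_gidx g : block_class (gidx KF T g) = Gclass g.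
Proof.
apply/idP/idP => [|Gg]; last first.
  by apply/orP; left; apply/existsP; exists g; rewrite eqxx.
case/orP=> [/existsP[g' /andP[/eqP/lshift_inj -> //]]|/existsP[k /existsP[t]]].
by rewrite eq_lrshift.
Qed.

Lemma block_class_fidx k t : block_class (fidx KG k t) = Fclass k.
Proof.
apply/idP/idP => [|Fk].
  case/orP=> [/existsP[g]|/existsP[k' /existsP[t' /andP[/eqP eq_kt Fk']]]].
    by rewrite eq_rlshift.
  by case: (mxvec_index_inj (rshift_inj eq_kt)) => ->.
by apply/orP; right; apply/existsP; exists k; apply/existsP; exists t; rewrite eqxx.
Qed.

Lemma Fclass_coupled g k1 k2 :
  Fclass k1 -> GF_coupled g k1 -> GF_coupled g k2 -> Fclass k2.
Proof.
move=> Fk1 cpl1 cpl2.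
have sim21 : simFb k2 k1 by apply/existsP; exists g; rewrite cpl1 cpl2.
apply/orP; right; case/orP: Fk1 => [/eqP <- //|/simFP sim10].
by apply/simFP; apply: simF_trans sim10; apply/simFP.
Qed.

Lemma block_class_uncoupled a b :
  block_class a -> ~~ block_class b -> S b a = 0.
Proof.
elim/block_index_ind: a => [g|k t]; elim/block_index_ind: b => [g'|k' t'];
  rewrite ?block_class_gidx ?block_class_fidx => in_a out_b.
- by apply: SGG_diag; apply: contraNneq out_b => ->.
- rewrite -Ssym mxE.
  apply/eqP; apply: contraNT out_b => nz; case/existsP: in_a => k /andP[Fk cpl].
  by apply: Fclass_coupled Fk cpl _; apply/existsP; exists t'.
- apply/eqP; apply: contraNT out_b => nz; apply/existsP; exists k.
  by rewrite in_a; apply/existsP; exists t.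
- by apply: SFF_diag; apply: contraNneq out_b => ->.
Qed.

End SimilarityClass.

Unset Implicit Arguments.

Theorem proposition1 (R : realFieldType) (KG KF T : nat)
  (S : 'M[R]_(KG + KF * T)) :
  (0 < KG)%N -> (0 < KF)%N -> (0 < T)%N ->
  S^T = S ->
  (forall v : 'cV[R]_(KG + KF * T), v != 0 -> 0 < (v^T *m S *m v) 0 0) ->
  (forall g1 g2 : 'I_KG, g1 != g2 -> S (gidx KF T g1) (gidx KF T g2) = 0) ->
  (forall (k1 k2 : 'I_KF) (t1 t2 : 'I_T), k1 != k2 ->
      S (fidx KG k1 t1) (fidx KG k2 t2) = 0) ->
  (forall k1 k2 k3 : 'I_KF, simF S k1 k2 -> simF S k2 k3 -> simF S k1 k3) ->
  forall (L D : 'M[R]_(KG + KF * T)),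
    is_trig_mx L -> (forall i, L i i = 1) ->
    is_diag_mx D -> (forall i, 0 < D i i) ->
    invmx S = L^T *m invmx D *m L ->
    forall k1 k2 : 'I_KF, (k1 < k2)%N -> ~ simF S k1 k2 ->
      forall t1 t2 : 'I_T, (1%:M - L) (fidx KG k2 t2) (fidx KG k1 t1) = 0.
Proof.
move=> _ _ _ Ssym Spd SGG SFF simF_trans L D Ltrig Ldiag Ddiag Dpos defSinv.
move=> k1 k2 lt_k12 not_sim12 t1 t2.
have Dunit : D \in unitmx.
  rewrite unitmxE unitfE det_trig ?is_diag_mx_is_trig //.
  by apply/lt0r_neq0/prodr_gt0 => i _; apply: Dpos.
have LStrig := ldl_mulmx_upper (posdef_unitmx Spd) Dunit Ltrig Ldiag Ddiag defSinv.
have in1 : block_class S k1 (fidx KG k1 t1) by rewrite block_class_fidx /Fclass eqxx.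
have out2 : ~~ block_class S k1 (fidx KG k2 t2).
  rewrite block_class_fidx /Fclass negb_or -val_eqE (gtn_eqF lt_k12) /=.
  by apply/simFP => -[g [cpl2 cpl1]]; apply: not_sim12; exists g.
have sep := block_class_uncoupled (k0 := k1) Ssym SGG SFF simF_trans.
rewrite !mxE (trig_factor_uncoupled_eq0 Spd Ltrig LStrig sep out2 in1) subr0.
by case: eqP => // eq21; rewrite eq21 in1 in out2.
Qed.
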